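(* Let $S,T>0$ and for $u\in C([0,S])$ define $(\mathcal{A}u)(s)=\int_0^1u(sr)\,dr$, $s\in[0,S]$. Suppose $U,V\in C^1([0,T],C([0,S]))$ satisfy: (i) $U(s,0)\ge V(s,0)$ for all $s\in[0,S]$; (ii) for all $(s,t)\in[0,S]\times[0,T]$, $$\partial_tU+U^2+U=2\mathcal{A}U+F,\qquad \partial_tV+V^2+V=2\mathcal{A}V+G,$$ where $F\ge G$. Then $U\ge V$ everywhere in $[0,S]\times[0,T]$. *)

From Stdlib Require Import Reals Lra.
From Coquelicot Require Import Coquelicot.
Open Scope R_scope.

Definition cont_on_0S (S : R) (u : R -> R) : Prop :=
  forall s, 0 <= s <= S -> forall eps, 0 < eps ->
    exists delta, 0 < delta /\
      forall s', 0 <= s' <= S -> Rabs (s' - s) < delta -> Rabs (u s' - u s) < eps.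

(* U : [0,T] -> C([0,S]) (written U t s) is C^1 with derivative dU, where
   C([0,S]) carries the sup norm:
   - U t and dU t lie in C([0,S]) for every t in [0,T];
   - the difference quotients converge to dU t uniformly in s (one-sided at
     the endpoints of [0,T]);
   - t |-> dU t is continuous into C([0,S]) (uniformly in s). *)
Definition C1_0T_C0S (S T : R) (U dU : R -> R -> R) : Prop :=
  (forall t, 0 <= t <= T -> cont_on_0S S (U t) /\ cont_on_0S S (dU t)) /\
  (forall t, 0 <= t <= T -> forall eps, 0 < eps ->
     exists delta, 0 < delta /\
       forall h, 0 <= t + h <= T -> h <> 0 -> Rabs h < delta ->
         forall s, 0 <= s <= S ->
           Rabs ((U (t + h) s - U t s) / h - dU t s) <= eps) /\
  (forall t, 0 <= t <= T -> forall eps, 0 < eps ->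
     exists delta, 0 < delta /\
       forall t', 0 <= t' <= T -> Rabs (t' - t) < delta ->
         forall s, 0 <= s <= S -> Rabs (dU t' s - dU t s) <= eps).

Definition avgA (u : R -> R) (s : R) : R := RInt (fun r => u (s * r)) 0 1.

From Stdlib Require Import Reals Lra Classical.
From Coquelicot Require Import Coquelicot.
Open Scope R_scope.

(** Put W = U - V.  Subtracting the two equations gives
    ∂t W + (U + V) W + W = 2 A W + F - G >= 2 A W.
    For eps > 0 and L larger than sup (1 - U - V), the function P = W + eps e^(L t)
    is positive at t = 0.  At a first zero (t, s0) of P the slice W(t, .) attains its
    minimum -eps e^(L t) at s0, so the averaging operator gives A W(s0) >= W(t, s0) and
    the equation forces ∂t P(t, s0) >= (U + V - 1 + L) eps e^(L t) > 0, which is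
    impossible at a first zero.  Hence P > 0 for every eps, and W >= 0. *)

Lemma real_induction (a b : R) (Q : R -> Prop) :
  (forall x, a <= x <= b -> (forall y, a <= y < x -> Q y) ->
     exists d, 0 < d /\ forall y, x <= y <= b -> y < x + d -> Q y) ->
  forall x, a <= x <= b -> Q x.
Proof.
  intros step x hx.
  set (E := fun t => t <= b /\ forall y, a <= y < t -> Q y).
  destruct (completeness E) as [c [ub lub]].
  - exists b. intros t [ht _]. exact ht.
  - exists a. split; [lra | intros y hy; lra].
  - assert (hac : a <= c) by (apply ub; split; [lra | intros y hy; lra]).
    assert (hcb : c <= b) by (apply lub; intros t [ht _]; exact ht).
    assert (below : forall y, a <= y < c -> Q y).
    { intros y hy. apply NNPP. intro hQ.
      enough (c <= y) by lra.
      apply lub. intros t [_ Ht]. apply Rnot_lt_le. intro hyt.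
      apply hQ, Ht. lra. }
    destruct (step c (conj hac hcb) below) as [d [hd Hd]].
    assert (hc : c = b).
    { destruct (Rle_lt_dec b c) as [|hcb']; [lra|].
      pose proof (Rmin_l b (c + d / 2)). pose proof (Rmin_r b (c + d / 2)).
      assert (Et : E (Rmin b (c + d / 2))).
      { split; [lra|]. intros y hy.
        destruct (Rlt_le_dec y c); [apply below; lra | apply Hd; lra]. }
      assert (Rmin b (c + d / 2) <= c) by (apply ub; exact Et).
      unfold Rmin in *. destruct Rle_dec; lra. }
    destruct (Rlt_le_dec x c); [apply below; lra | apply Hd; lra].
Qed.

Lemma interval_bound_of_local (a b : R) (Q : R -> R -> Prop) :
  (forall x B B', B <= B' -> Q x B -> Q x B') ->
  (forall x, a <= x <= b -> exists d, 0 < d /\ exists B,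
     forall y, a <= y <= b -> Rabs (y - x) < d -> Q y B) ->
  exists B, forall x, a <= x <= b -> Q x B.
Proof.
  intros mono loc.
  destruct (Rlt_le_dec b a) as [hba|hab].
  { exists 0. intros x hx. lra. }
  assert (hQ : forall x, a <= x <= b -> exists B, forall y, a <= y <= x -> Q y B).
  { apply real_induction. intros x hx IH.
    destruct (loc x hx) as [d [hd [B0 HB0]]].
    exists d. split; [exact hd|]. intros y hy hyd.
    destruct (Rlt_le_dec (x - d / 2) a) as [hnear|hfar].
    - exists B0. intros z hz. apply HB0; [lra|]. apply Rabs_def1; lra.
    - destruct (IH (x - d / 2)) as [B1 HB1]; [lra|].
      exists (Rmax B1 B0). intros z hz.
      destruct (Rle_lt_dec z (x - d / 2)).
      + apply mono with B1; [apply Rmax_l | apply HB1; lra].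
      + apply mono with B0; [apply Rmax_r|].
        apply HB0; [lra|]. apply Rabs_def1; lra. }
  destruct (hQ b (conj hab (Rle_refl b))) as [B HB].
  exists B. intros x hx. apply HB. lra.
Qed.

Lemma cont_on_0S_bounded (S : R) (u : R -> R) :
  cont_on_0S S u -> exists B, forall x, 0 <= x <= S -> Rabs (u x) <= B.
Proof.
  intros hu.
  apply (interval_bound_of_local 0 S (fun x B => Rabs (u x) <= B)).
  - intros x B B' hB h. lra.
  - intros x hx. destruct (hu x hx 1 Rlt_0_1) as [d [hd Hd]].
    exists d. split; [exact hd|]. exists (Rabs (u x) + 1). intros y hy hyx.
    specialize (Hd y hy hyx). pose proof (Rabs_triang_inv (u y) (u x)). lra.
Qed.

Lemma cont_on_0S_pos_lower_bound (S : R) (u : R -> R) :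
  cont_on_0S S u -> (forall x, 0 <= x <= S -> 0 < u x) ->
  exists m, 0 < m /\ forall x, 0 <= x <= S -> m <= u x.
Proof.
  intros hu hpos.
  destruct (interval_bound_of_local 0 S (fun x B => 0 < B /\ / B <= u x)) as [B HB].
  - intros x B B' hB [hB0 h]. split; [lra|].
    pose proof (Rinv_le_contravar B B' hB0 hB). lra.
  - intros x hx. pose proof (hpos x hx) as hux.
    destruct (hu x hx (u x / 2)) as [d [hd Hd]]; [lra|].
    exists d. split; [exact hd|]. exists (2 / u x). intros y hy hyx.
    specialize (Hd y hy hyx). apply Rabs_def2 in Hd.
    split; [apply Rdiv_lt_0_compat; lra|].
    replace (/ (2 / u x)) with (u x / 2) by (field; lra). lra.
  - destruct (Rlt_le_dec S 0) as [hS|hS].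
    { exists 1. split; [lra|]. intros x hx. lra. }
    destruct (HB 0) as [hB0 _]; [lra|].
    exists (/ B). split; [apply Rinv_0_lt_compat; exact hB0|].
    intros x hx. apply (HB x hx).
Qed.

Lemma Rabs_add_le_halves (a b eps : R) :
  Rabs a <= eps / 2 -> Rabs b <= eps / 2 -> Rabs (a + b) <= eps.
Proof. pose proof (Rabs_triang a b). lra. Qed.

Lemma cont_on_0S_add (S : R) (u v : R -> R) :
  cont_on_0S S u -> cont_on_0S S v -> cont_on_0S S (fun x => u x + v x).
Proof.
  intros hu hv s hs eps heps.
  destruct (hu s hs (eps / 2)) as [d1 [hd1 H1]]; [lra|].
  destruct (hv s hs (eps / 2)) as [d2 [hd2 H2]]; [lra|].
  exists (Rmin d1 d2). split; [apply Rmin_pos; assumption|].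
  intros s' hs' hss'.
  specialize (H1 s' hs' (Rlt_le_trans _ _ _ hss' (Rmin_l d1 d2))).
  specialize (H2 s' hs' (Rlt_le_trans _ _ _ hss' (Rmin_r d1 d2))).
  replace (u s' + v s' - (u s + v s)) with ((u s' - u s) + (v s' - v s)) by ring.
  pose proof (Rabs_triang (u s' - u s) (v s' - v s)). lra.
Qed.

Lemma cont_on_0S_opp (S : R) (u : R -> R) :
  cont_on_0S S u -> cont_on_0S S (fun x => - u x).
Proof.
  intros hu s hs eps heps. destruct (hu s hs eps heps) as [d [hd Hd]].
  exists d. split; [exact hd|]. intros s' hs' hss'.
  replace (- u s' - - u s) with (- (u s' - u s)) by ring.
  rewrite Rabs_Ropp. exact (Hd s' hs' hss').
Qed.

Lemma C1_0T_C0S_add (S T : R) (U dU V dV : R -> R -> R) :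
  C1_0T_C0S S T U dU -> C1_0T_C0S S T V dV ->
  C1_0T_C0S S T (fun t s => U t s + V t s) (fun t s => dU t s + dV t s).
Proof.
  intros [cU [qU dcU]] [cV [qV dcV]]. split; [|split].
  - intros t ht. destruct (cU t ht), (cV t ht).
    split; apply cont_on_0S_add; assumption.
  - intros t ht eps heps.
    destruct (qU t ht (eps / 2)) as [d1 [hd1 H1]]; [lra|].
    destruct (qV t ht (eps / 2)) as [d2 [hd2 H2]]; [lra|].
    exists (Rmin d1 d2). split; [apply Rmin_pos; assumption|].
    intros h hth hh hhd s hs.
    specialize (H1 h hth hh (Rlt_le_trans _ _ _ hhd (Rmin_l d1 d2)) s hs).
    specialize (H2 h hth hh (Rlt_le_trans _ _ _ hhd (Rmin_r d1 d2)) s hs).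
    replace ((U (t + h) s + V (t + h) s - (U t s + V t s)) / h - (dU t s + dV t s))
      with (((U (t + h) s - U t s) / h - dU t s) + ((V (t + h) s - V t s) / h - dV t s))
      by (field; exact hh).
    apply Rabs_add_le_halves; assumption.
  - intros t ht eps heps.
    destruct (dcU t ht (eps / 2)) as [d1 [hd1 H1]]; [lra|].
    destruct (dcV t ht (eps / 2)) as [d2 [hd2 H2]]; [lra|].
    exists (Rmin d1 d2). split; [apply Rmin_pos; assumption|].
    intros t' ht' htt' s hs.
    specialize (H1 t' ht' (Rlt_le_trans _ _ _ htt' (Rmin_l d1 d2)) s hs).
    specialize (H2 t' ht' (Rlt_le_trans _ _ _ htt' (Rmin_r d1 d2)) s hs).
    replace (dU t' s + dV t' s - (dU t s + dV t s))
      with ((dU t' s - dU t s) + (dV t' s - dV t s)) by ring.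
    apply Rabs_add_le_halves; assumption.
Qed.

Lemma C1_0T_C0S_opp (S T : R) (U dU : R -> R -> R) :
  C1_0T_C0S S T U dU -> C1_0T_C0S S T (fun t s => - U t s) (fun t s => - dU t s).
Proof.
  intros [cU [qU dcU]]. split; [|split].
  - intros t ht. destruct (cU t ht). split; apply cont_on_0S_opp; assumption.
  - intros t ht eps heps. destruct (qU t ht eps heps) as [d [hd Hd]].
    exists d. split; [exact hd|]. intros h hth hh hhd s hs.
    replace ((- U (t + h) s - - U t s) / h - - dU t s)
      with (- ((U (t + h) s - U t s) / h - dU t s)) by (field; exact hh).
    rewrite Rabs_Ropp. exact (Hd h hth hh hhd s hs).
  - intros t ht eps heps. destruct (dcU t ht eps heps) as [d [hd Hd]].
    exists d. split; [exact hd|]. intros t' ht' htt' s hs.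
    replace (- dU t' s - - dU t s) with (- (dU t' s - dU t s)) by ring.
    rewrite Rabs_Ropp. exact (Hd t' ht' htt' s hs).
Qed.

Lemma C1_0T_C0S_of_real (S T : R) (f f' : R -> R) :
  (forall t, derivable_pt_lim f t (f' t)) -> (forall t, continuity_pt f' t) ->
  C1_0T_C0S S T (fun t _ => f t) (fun t _ => f' t).
Proof.
  intros hf hf'.
  assert (cst : forall c, cont_on_0S S (fun _ => c)).
  { intros c s _ eps heps. exists 1. split; [lra|]. intros s' _ _.
    rewrite Rminus_diag, Rabs_R0. exact heps. }
  split; [|split].
  - intros t _. split; apply cst.
  - intros t _ eps heps. destruct (hf t eps heps) as [d Hd].
    exists d. split; [apply cond_pos|]. intros h _ hh hhd _ _.
    left. exact (Hd h hh hhd).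
  - intros t _ eps heps. destruct (hf' t eps heps) as [d [hd Hd]].
    exists d. split; [exact hd|]. intros t' _ htt' _ _.
    destruct (Req_dec t' t) as [->|hne].
    { rewrite Rminus_diag, Rabs_R0. lra. }
    left. apply (Hd t'). split; [split; [exact I | congruence] | exact htt'].
Qed.

Lemma C1_0T_C0S_tcont (S T : R) (U dU : R -> R -> R) :
  C1_0T_C0S S T U dU ->
  forall t, 0 <= t <= T -> forall eta, 0 < eta -> exists d, 0 < d /\
    forall t', 0 <= t' <= T -> Rabs (t' - t) < d ->
      forall s, 0 <= s <= S -> Rabs (U t' s - U t s) <= eta.
Proof.
  intros [cU [qU _]] t ht eta heta.
  destruct (cont_on_0S_bounded S (dU t) (proj2 (cU t ht))) as [B HB].
  set (K := Rabs B + 1).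
  assert (hK : 0 < K) by (unfold K; pose proof (Rabs_pos B); lra).
  destruct (qU t ht 1 Rlt_0_1) as [d0 [hd0 Hd0]].
  exists (Rmin d0 (eta / K)).
  split; [apply Rmin_pos; [exact hd0 | apply Rdiv_lt_0_compat; assumption]|].
  intros t' ht' htt' s hs.
  destruct (Req_dec t' t) as [->|hne].
  { rewrite Rminus_diag, Rabs_R0. lra. }
  pose proof (Rmin_l d0 (eta / K)). pose proof (Rmin_r d0 (eta / K)).
  assert (hq := Hd0 (t' - t)). replace (t + (t' - t)) with t' in hq by ring.
  specialize (hq ht' ltac:(lra) ltac:(lra) s hs).
  set (q := (U t' s - U t s) / (t' - t)) in hq.
  assert (hslope : Rabs q <= K).
  { pose proof (Rabs_triang (q - dU t s) (dU t s)) as htri.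
    replace (q - dU t s + dU t s) with q in htri by ring.
    pose proof (HB s hs). pose proof (Rle_abs B). unfold K. lra. }
  replace (U t' s - U t s) with (q * (t' - t)) by (unfold q; field; lra).
  rewrite Rabs_mult.
  apply Rle_trans with (K * (eta / K)); [|right; field; lra].
  apply Rmult_le_compat; try apply Rabs_pos; lra.
Qed.

Lemma C1_0T_C0S_bounded (S T : R) (U dU : R -> R -> R) :
  C1_0T_C0S S T U dU ->
  exists M, forall t s, 0 <= t <= T -> 0 <= s <= S -> Rabs (U t s) <= M.
Proof.
  intros hU.
  destruct (interval_bound_of_local 0 T
              (fun t B => forall s, 0 <= s <= S -> Rabs (U t s) <= B)) as [M HM].
  - intros t B B' hB h s hs. specialize (h s hs). lra.
  - intros t ht.
    destruct (cont_on_0S_bounded S (U t) (proj1 (proj1 hU t ht))) as [B HB].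
    destruct (C1_0T_C0S_tcont S T U dU hU t ht 1 Rlt_0_1) as [d [hd Hd]].
    exists d. split; [exact hd|]. exists (B + 1). intros t' ht' htt' s hs.
    specialize (Hd t' ht' htt' s hs). specialize (HB s hs).
    pose proof (Rabs_triang_inv (U t' s) (U t s)). lra.
  - exists M. intros t s ht hs. exact (HM t ht s hs).
Qed.

Lemma C1_0T_C0S_left_lt (S T : R) (P dP : R -> R -> R) (t s : R) :
  C1_0T_C0S S T P dP -> 0 < t <= T -> 0 <= s <= S -> 0 < dP t s ->
  exists t', 0 <= t' < t /\ P t' s < P t s.
Proof.
  intros [_ [qP _]] ht hs hd.
  destruct (qP t ltac:(lra) (dP t s / 2) ltac:(lra)) as [d [hd0 Hd]].
  assert (hmin : 0 < Rmin d t) by (apply Rmin_pos; lra).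
  pose proof (Rmin_l d t). pose proof (Rmin_r d t).
  set (h := - Rmin d t / 2).
  assert (hh : h < 0) by (unfold h; lra).
  exists (t + h). split; [unfold h; lra|].
  assert (hq := Hd h ltac:(unfold h; lra) ltac:(lra)
                  ltac:(rewrite Rabs_left by lra; unfold h; lra) s hs).
  apply Rabs_le_between in hq.
  set (q := (P (t + h) s - P t s) / h) in hq.
  replace (P (t + h) s) with (P t s + q * h) by (unfold q; field; lra).
  nra.
Qed.

Lemma C1_0T_C0S_stays_pos (S T : R) (P dP : R -> R -> R) :
  C1_0T_C0S S T P dP ->
  (forall s, 0 <= s <= S -> 0 < P 0 s) ->
  (forall t s0, 0 < t <= T -> 0 <= s0 <= S ->
     (forall s, 0 <= s <= S -> 0 <= P t s) -> P t s0 = 0 -> 0 < dP t s0) ->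
  forall t, 0 <= t <= T -> forall s, 0 <= s <= S -> 0 < P t s.
Proof.
  intros hP hP0 htouch.
  apply (real_induction 0 T (fun t => forall s, 0 <= s <= S -> 0 < P t s)).
  intros t ht before.
  assert (nonneg : forall s, 0 <= s <= S -> 0 <= P t s).
  { intros s hs. apply Rnot_lt_le. intro hneg.
    destruct (Req_dec t 0) as [->|ht0]; [specialize (hP0 s hs); lra|].
    destruct (C1_0T_C0S_tcont S T P dP hP t ht (- P t s / 2)) as [d [hd Hd]]; [lra|].
    assert (0 < Rmin d t) by (apply Rmin_pos; lra).
    pose proof (Rmin_l d t). pose proof (Rmin_r d t).
    set (t' := t - Rmin d t / 2).
    specialize (Hd t' ltac:(unfold t'; lra)
                  ltac:(unfold t'; apply Rabs_def1; lra) s hs).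
    specialize (before t' ltac:(unfold t'; lra) s hs).
    apply Rabs_le_between in Hd. lra. }
  destruct (classic (exists s0, 0 <= s0 <= S /\ P t s0 = 0)) as [[s0 [hs0 hzero]]|hnz].
  - exfalso.
    assert (ht0 : 0 < t <= T).
    { destruct (Req_dec t 0) as [->|]; [specialize (hP0 s0 hs0); lra | lra]. }
    destruct (C1_0T_C0S_left_lt S T P dP t s0 hP ht0 hs0
                (htouch t s0 ht0 hs0 nonneg hzero)) as [t' [ht' hlt]].
    specialize (before t' ht' s0 hs0). lra.
  - assert (pos : forall s, 0 <= s <= S -> 0 < P t s).
    { intros s hs. destruct (Rle_lt_or_eq_dec 0 (P t s) (nonneg s hs)) as [|he];
        [assumption|].
      exfalso. apply hnz. exists s. auto. }
    destruct (cont_on_0S_pos_lower_bound S (P t) (proj1 (proj1 hP t ht)) pos)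
      as [m [hm Hm]].
    destruct (C1_0T_C0S_tcont S T P dP hP t ht (m / 2)) as [d [hd Hd]]; [lra|].
    exists d. split; [exact hd|]. intros t' ht' htd s hs.
    specialize (Hd t' ltac:(lra) ltac:(apply Rabs_def1; lra) s hs).
    specialize (Hm s hs). apply Rabs_le_between in Hd. lra.
Qed.

Lemma ex_RInt_avgA (S : R) (u : R -> R) (s : R) :
  cont_on_0S S u -> 0 <= s <= S -> ex_RInt (fun r => u (s * r)) 0 1.
Proof.
  intros hu hs.
  set (c := fun r => Rmax 0 (Rmin 1 r)).
  assert (hc : forall r, 0 <= c r <= 1)
    by (intro r; unfold c, Rmax, Rmin; repeat destruct Rle_dec; lra).
  assert (hc_lip : forall r r', Rabs (c r - c r') <= Rabs (r - r')).
  { intros r r'. unfold c, Rmax, Rmin. repeat destruct Rle_dec;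
      unfold Rabs; repeat destruct Rcase_abs; lra. }
  (* clamping to [0, 1] makes the integrand continuous on all of R *)
  apply ex_RInt_ext with (f := fun r => u (s * c r)).
  { intros r hr. rewrite Rmin_left in hr by lra. rewrite Rmax_right in hr by lra.
    unfold c. rewrite Rmin_right by lra. rewrite Rmax_right by lra. reflexivity. }
  apply (@ex_RInt_continuous R_CompleteNormedModule). intros z _.
  apply continuity_pt_filterlim. intros eps heps.
  assert (hsz : 0 <= s * c z <= S) by (pose proof (hc z); split; nra).
  destruct (hu (s * c z) hsz eps heps) as [d [hd Hd]].
  exists (d / (s + 1)). split; [apply Rdiv_lt_0_compat; lra|].
  intros x [_ hx]. simpl in *. unfold R_dist in *.
  apply Hd; [pose proof (hc x); split; nra|].
  replace (s * c x - s * c z) with (s * (c x - c z)) by ring.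
  rewrite Rabs_mult, (Rabs_right s) by lra.
  pose proof (hc_lip x z). pose proof (Rabs_pos (x - z)).
  apply Rle_lt_trans with ((s + 1) * Rabs (x - z)); [nra|].
  replace d with ((s + 1) * (d / (s + 1))) by (field; lra).
  apply Rmult_lt_compat_l; lra.
Qed.

Lemma avgA_sub_ge (S : R) (u v : R -> R) (c s : R) :
  cont_on_0S S u -> cont_on_0S S v -> 0 <= s <= S ->
  (forall x, 0 <= x <= S -> c <= u x - v x) -> c <= avgA u s - avgA v s.
Proof.
  intros hu hv hs huv. unfold avgA.
  pose proof (ex_RInt_avgA S u s hu hs) as iu.
  pose proof (ex_RInt_avgA S v s hv hs) as iv.
  assert (RInt (fun r => u (s * r)) 0 1 - RInt (fun r => v (s * r)) 0 1
          = RInt (fun r => u (s * r) - v (s * r)) 0 1) as ->.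
  { symmetry. apply (@RInt_minus R_CompleteNormedModule); assumption. }
  replace c with (RInt (fun _ => c) 0 1) at 1.
  2:{ rewrite RInt_const. unfold scal. simpl. unfold mult. simpl. ring. }
  apply RInt_le; [lra | apply ex_RInt_const | |].
  - apply (@ex_RInt_minus R_NormedModule); assumption.
  - intros r hr. apply huv. split; nra.
Qed.

Section Comparison.

Variables (S T : R) (U dU V dV F G : R -> R -> R).
Hypotheses (hU : C1_0T_C0S S T U dU) (hV : C1_0T_C0S S T V dV).
Hypothesis hUV0 : forall s, 0 <= s <= S -> U 0 s >= V 0 s.
Hypothesis eqU : forall s t, 0 <= s <= S -> 0 <= t <= T ->
  dU t s + (U t s) ^ 2 + U t s = 2 * avgA (U t) s + F t s.
Hypothesis eqV : forall s t, 0 <= s <= S -> 0 <= t <= T ->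
  dV t s + (V t s) ^ 2 + V t s = 2 * avgA (V t) s + G t s.
Hypothesis hFG : forall s t, 0 <= s <= S -> 0 <= t <= T -> F t s >= G t s.

Lemma deriv_sub_ge_at_min (t s0 : R) :
  0 <= t <= T -> 0 <= s0 <= S ->
  (forall s, 0 <= s <= S -> U t s0 - V t s0 <= U t s - V t s) ->
  (1 - U t s0 - V t s0) * (U t s0 - V t s0) <= dU t s0 - dV t s0.
Proof.
  intros ht hs0 hmin.
  assert (havg : U t s0 - V t s0 <= avgA (U t) s0 - avgA (V t) s0).
  { apply (avgA_sub_ge S); [apply (proj1 hU) | apply (proj1 hV) | |]; assumption. }
  pose proof (eqU s0 t hs0 ht). pose proof (eqV s0 t hs0 ht).
  pose proof (hFG s0 t hs0 ht). nra.
Qed.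

Lemma sub_add_exp_pos (L eps : R) :
  0 < eps ->
  (forall t s, 0 <= t <= T -> 0 <= s <= S -> 1 < U t s + V t s + L) ->
  forall t, 0 <= t <= T -> forall s, 0 <= s <= S ->
    0 < U t s - V t s + eps * exp (L * t).
Proof.
  intros heps hL.
  assert (hexp : forall t, derivable_pt_lim (fun t => eps * exp (L * t)) t
                                            (eps * (L * exp (L * t)))).
  { intro t. apply is_derive_Reals. auto_derive; [exact I | ring]. }
  apply (C1_0T_C0S_stays_pos S T _
           (fun t s => dU t s - dV t s + eps * (L * exp (L * t)))).
  - apply C1_0T_C0S_add; [apply C1_0T_C0S_add; [exact hU | exact (C1_0T_C0S_opp _ _ _ _ hV)]|].
    apply C1_0T_C0S_of_real; [exact hexp|].
    intro t. apply derivable_continuous_pt.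
    exists (eps * (L * (L * exp (L * t)))). apply is_derive_Reals.
    auto_derive; [exact I | ring].
  - intros s hs. rewrite Rmult_0_r, exp_0. specialize (hUV0 s hs). lra.
  - intros t s0 ht hs0 hnonneg hzero.
    set (E := eps * exp (L * t)) in *.
    assert (hE : 0 < E) by (apply Rmult_lt_0_compat; [exact heps | apply exp_pos]).
    assert (hd := deriv_sub_ge_at_min t s0 ltac:(lra) hs0
                    ltac:(intros s hs; specialize (hnonneg s hs); lra)).
    specialize (hL t s0 ltac:(lra) hs0).
    replace (eps * (L * exp (L * t))) with (L * E) by (unfold E; ring).
    nra.
Qed.

End Comparison.

Theorem proposition6p1 (S T : R) (U dU V dV F G : R -> R -> R) :
  0 < S -> 0 < T ->
  C1_0T_C0S S T U dU -> C1_0T_C0S S T V dV ->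
  (forall s, 0 <= s <= S -> U 0 s >= V 0 s) ->
  (forall s t, 0 <= s <= S -> 0 <= t <= T ->
     dU t s + (U t s) ^ 2 + U t s = 2 * avgA (U t) s + F t s) ->
  (forall s t, 0 <= s <= S -> 0 <= t <= T ->
     dV t s + (V t s) ^ 2 + V t s = 2 * avgA (V t) s + G t s) ->
  (forall s t, 0 <= s <= S -> 0 <= t <= T -> F t s >= G t s) ->
  forall s t, 0 <= s <= S -> 0 <= t <= T -> U t s >= V t s.
Proof.
  intros _ _ hU hV hUV0 eqU eqV hFG s t hs ht.
  destruct (C1_0T_C0S_bounded S T U dU hU) as [MU HMU].
  destruct (C1_0T_C0S_bounded S T V dV hV) as [MV HMV].
  set (L := MU + MV + 2).
  assert (hL : forall t s, 0 <= t <= T -> 0 <= s <= S -> 1 < U t s + V t s + L).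
  { intros t' s' ht' hs'.
    pose proof (proj1 (Rabs_le_between _ _) (HMU t' s' ht' hs')).
    pose proof (proj1 (Rabs_le_between _ _) (HMV t' s' ht' hs')).
    unfold L. lra. }
  apply Rnot_lt_ge. intro hlt.
  pose proof (exp_pos (L * t)).
  set (eps := (V t s - U t s) / (2 * exp (L * t))).
  assert (heps : 0 < eps) by (apply Rdiv_lt_0_compat; lra).
  pose proof (sub_add_exp_pos S T U dU V dV F G hU hV hUV0 eqU eqV hFG
                L eps heps hL t ht s hs) as hpos.
  replace (eps * exp (L * t)) with ((V t s - U t s) / 2) in hpos
    by (unfold eps; field; lra).
  lra.
Qed.
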